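(* Let $\Delta_1$ and $\Delta_2$ be finite simplicial complexes on disjoint vertex sets. Then the join $\Delta_1*\Delta_2=\{F\cup G : F\in\Delta_1,\ G\in\Delta_2\}$ (a simplicial complex on $V(\Delta_1)\cup V(\Delta_2)$) is sortable if and only if both $\Delta_1$ and $\Delta_2$ are sortable.
   Context: For a finite set $F\subset\mathbb{N}$ write $\mathbf{x}^F=\prod_{i\in F}x_i$. For finite sets $F,G\subset \mathbb{N}$ with $|F|=r$, $|G|=s$, write $\mathbf{x}^F\mathbf{x}^G=x_{i_1}x_{i_2}\cdots x_{i_{r+s}}$ with $i_1\le i_2\le\cdots\le i_{r+s}$ and define $\mathrm{sort}(F,G)=(F',G')$ where $F'=\{i_k: k \text{ odd}\}$ and $G'=\{i_k : k\text{ even}\}$. A finite simplicial complex $\Delta$ with $V(\Delta)\subset\mathbb{N}$ is sortable with respect to the given labeling if $\mathrm{sort}(F,G)\in\Delta\times\Delta$ for all $F,G\in\Delta$; a simplicial complex is sortable if it is sortable with respect to some labeling of its vertices by integers (distinct positive integers). *)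

From mathcomp Require Import all_boot.
Set Implicit Arguments. Unset Strict Implicit. Unset Printing Implicit Defensive.

Section Complexes.
Variable T : finType.

Definition simplicial_complex (D : {set {set T}}) : bool :=
  (set0 \in D) && [forall F in D, forall G : {set T}, (G \subset F) ==> (G \in D)].

Definition vertices (D : {set {set T}}) : {set T} := \bigcup_(F in D) F.

Definition join (D1 D2 : {set {set T}}) : {set {set T}} :=
  [set F :|: G | F in D1, G in D2].

Definition labels (f : T -> nat) (F : {set T}) : seq nat := [seq f x | x <- enum F].

(* x^F x^G = x_{i_1} ... x_{i_{r+s}} with i_1 <= ... <= i_{r+s} *)
Definition merged (f : T -> nat) (F G : {set T}) : seq nat :=
  sort leq (labels f F ++ labels f G).

(* F' = {i_k : k odd} (1-indexed, i.e. 0-indexed even positions),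
   G' = {i_k : k even} *)
Definition sortF (f : T -> nat) (F G : {set T}) : seq nat :=
  let m := merged f F G in [seq nth 0 m k | k <- iota 0 (size m) & ~~ odd k].
Definition sortG (f : T -> nat) (F G : {set T}) : seq nat :=
  let m := merged f F G in [seq nth 0 m k | k <- iota 0 (size m) & odd k].

Definition labeled_face (f : T -> nat) (D : {set {set T}}) (S : seq nat) : Prop :=
  exists2 H, H \in D & labels f H =i S.

Definition sortable_wrt (f : T -> nat) (D : {set {set T}}) : Prop :=
  forall F G, F \in D -> G \in D ->
    labeled_face f D (sortF f F G) /\ labeled_face f D (sortG f F G).

Definition sortable (D : {set {set T}}) : Prop :=
  exists f : T -> nat,
    [/\ {in vertices D &, injective f}, {in vertices D, forall x, 0 < f x}
      & sortable_wrt f D].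
End Complexes.

From mathcomp Require Import all_boot.
From mathcomp Require Import zify.
Set Implicit Arguments. Unset Strict Implicit. Unset Printing Implicit Defensive.

(* (=>) Every face F of D1 is the face F u {} of the join, so a labeling
   making the join sortable restricts to D1.  If F, G are faces of D1, the
   faces sort(F, G) of the join only carry labels of vertices of D1; by
   injectivity of the labeling the D2-part of their witnessing join face is
   empty, so they are labeled faces of D1.  D2 is symmetric.

   (<=) Given labelings f1 of D1 and f2 of D2, glue them into f, which is f1
   on V(D1) and N + f2 on V(D2), where N bounds f1 on V(D1).  Then every
   label of V(D1) lies below every label of V(D2), so the merged label list
   of (F1 u F2, G1 u G2) is the merged list of (F1, G1) followed by the
   shifted merged list of (F2, G2).  Selecting the odd (resp. even) positions
   of a concatenation selects the odd positions of the first part and, up to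
   the parity of its length, the odd or even positions of the second; hence
   sort(F, G) is a union of a sorted face of D1 and a sorted face of D2. *)

Definition sel (P : pred nat) (m : seq nat) : seq nat :=
  [seq nth 0 m k | k <- iota 0 (size m) & P k].

Lemma selP P m x :
  reflect (exists2 k, (k < size m) && P k & x = nth 0 m k) (x \in sel P m).
Proof.
apply: (iffP mapP) => -[k Hk ->]; exists k => //.
  by move: Hk; rewrite mem_filter mem_iota add0n andbC.
by rewrite mem_filter mem_iota add0n andbC.
Qed.

Lemma sel_sub P m : {subset sel P m <= m}.
Proof. by move=> x /selP[k /andP[Hk _] ->]; apply: mem_nth. Qed.

Lemma sel_map P g m : sel P (map g m) =i map g (sel P m).
Proof.
move=> x; apply/selP/mapP => [[k]|[y /selP[k Hk ->] ->]].
  rewrite size_map => Hk ->; exists (nth 0 m k).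
    by apply/selP; exists k.
  by rewrite (nth_map 0) //; case/andP: Hk.
by exists k; rewrite ?size_map // (nth_map 0) //; case/andP: Hk.
Qed.

Lemma sel_parity_cat b a c :
  sel (fun k => odd k == b) (a ++ c) =i
  sel (fun k => odd k == b) a ++ sel (fun k => odd k == b (+) odd (size a)) c.
Proof.
move=> x; rewrite mem_cat; apply/selP/orP.
  move=> [k /andP[Hk Hb] ->]; rewrite nth_cat.
  case: (ltnP k (size a)) => Hka.
    by left; apply/selP; exists k; rewrite ?Hka.
  right; apply/selP; exists (k - size a) => //.
  apply/andP; split; first by move: Hk; rewrite size_cat; lia.
  by move/eqP: Hb => <-; rewrite oddB //; case: (odd k); case: (odd (size a)).
case=> /selP[k /andP[Hk Hb] ->].
  by exists k; rewrite ?nth_cat ?Hk // size_cat Hb andbT ltn_addr.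
exists (size a + k); last by rewrite nth_cat ltnNge leq_addr /= addKn.
rewrite size_cat ltn_add2l Hk /= oddD (eqP Hb).
by case: b {Hb}; case: (odd (size a)).
Qed.

Lemma sortF_sel (T : finType) f (F G : {set T}) :
  sortF f F G = sel (fun k => odd k == false) (merged f F G).
Proof. by rewrite /sortF /sel; congr map; apply: eq_filter => k; case: (odd k). Qed.

Lemma sortG_sel (T : finType) f (F G : {set T}) :
  sortG f F G = sel (fun k => odd k == true) (merged f F G).
Proof. by rewrite /sortG /sel; congr map; apply: eq_filter => k; case: (odd k). Qed.

Lemma sort_cat_separated (s1 s2 : seq nat) :
  (forall x y, x \in s1 -> y \in s2 -> x <= y) ->
  sort leq (s1 ++ s2) = sort leq s1 ++ sort leq s2.
Proof.
move=> sep; apply: (sorted_eq leq_trans anti_leq).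
- exact: sort_sorted leq_total _.
- rewrite sorted_pairwise; last exact: leq_trans.
  rewrite pairwise_cat -!sorted_pairwise; try exact: leq_trans.
  rewrite !(sort_sorted leq_total) !andbT.
  by apply/allrelP => x y; rewrite !mem_sort; apply: sep.
- by rewrite perm_sort perm_sym; apply: perm_cat; rewrite perm_sort.
Qed.

Lemma sort_shift N (s : seq nat) :
  sort leq (map (addn N) s) = map (addn N) (sort leq s).
Proof.
apply: (sorted_eq leq_trans anti_leq).
- exact: sort_sorted leq_total _.
- apply: (homo_sorted (e := leq)) => [x y|]; first by rewrite leq_add2l.
  exact: sort_sorted leq_total _.
- by rewrite perm_sort perm_map // perm_sym perm_sort.
Qed.

Section Labels.
Variable T : finType.
Implicit Types (f : T -> nat) (H : {set T}) (D : {set {set T}}).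

Lemma labelsP f H y : reflect (exists2 x, x \in H & y = f x) (y \in labels f H).
Proof. by apply: (iffP mapP) => -[x Hx ->]; exists x; rewrite ?mem_enum in Hx *. Qed.

Lemma labels_eq_in f g H : {in H, f =1 g} -> labels f H = labels g H.
Proof. by move=> fg; apply/eq_in_map => x; rewrite mem_enum; apply: fg. Qed.

Lemma labels_setU f H1 H2 :
  [disjoint H1 & H2] -> perm_eq (labels f (H1 :|: H2)) (labels f H1 ++ labels f H2).
Proof.
move=> dis; rewrite /labels -map_cat; apply: perm_map; apply: uniq_perm.
- exact: enum_uniq.
- rewrite cat_uniq !enum_uniq /= andbT; apply/hasPn => x; rewrite !mem_enum => x2.
  by apply/negP => x1; move: dis; rewrite disjoint_subset => /subsetP/(_ x x1); rewrite inE x2.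
- by move=> x; rewrite mem_cat !mem_enum inE.
Qed.

Lemma face_vert D F : F \in D -> F \subset vertices D.
Proof. by move=> HF; apply: bigcup_sup. Qed.

Lemma joinP D1 D2 H :
  reflect (exists F1 F2, [/\ F1 \in D1, F2 \in D2 & H = F1 :|: F2]) (H \in join D1 D2).
Proof.
apply: (iffP imset2P) => [[F1 F2 h1 h2 ->]|[F1 [F2 [h1 h2 ->]]]]; first by exists F1, F2.
by exists F1 F2.
Qed.

Lemma join_sym D1 D2 : join D1 D2 = join D2 D1.
Proof.
by apply/setP => H; apply/joinP/joinP => -[F1 [F2 [h1 h2 ->]]]; exists F2, F1; rewrite setUC.
Qed.

Lemma vertices_join D1 D2 : vertices (join D1 D2) \subset vertices D1 :|: vertices D2.
Proof.
apply/subsetP => x /bigcupP[H /joinP[F1 [F2 [h1 h2 ->]]]]; rewrite !inE => /orP[] xF.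
  by rewrite (subsetP (face_vert h1)).
by rewrite (subsetP (face_vert h2)) ?orbT.
Qed.

Lemma disjoint_faces D1 D2 F1 F2 :
  [disjoint vertices D1 & vertices D2] -> F1 \in D1 -> F2 \in D2 -> [disjoint F1 & F2].
Proof.
move=> dis h1 h2; apply: disjointWl (face_vert h1) _.
by apply: disjointWr (face_vert h2) _.
Qed.
End Labels.

Section Restriction.
Variable T : finType.
Variables D1 D2 : {set {set T}}.
Hypothesis D2_empty_face : set0 \in D2.
Hypothesis dis : [disjoint vertices D1 & vertices D2].

Lemma join_face_left F : F \in D1 -> F \in join D1 D2.
Proof. by move=> HF; apply/joinP; exists F, set0; rewrite setU0. Qed.

Lemma vertices_join_left : vertices D1 \subset vertices (join D1 D2).
Proof.
by apply/subsetP => x /bigcupP[F HF xF]; apply/bigcupP; exists F => //; apply: join_face_left.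
Qed.

(* A labeled face of the join all of whose labels are labels of vertices of
   D1 is a labeled face of D1: its D2-part must be empty. *)
Lemma labeled_face_restrict (f : T -> nat) (S : seq nat) :
  {in vertices (join D1 D2) &, injective f} ->
  {subset S <= [seq f x | x in vertices D1]} ->
  labeled_face f (join D1 D2) S -> labeled_face f D1 S.
Proof.
move=> inj subS [H HH eqH]; case/joinP: (HH) => H1 [H2 [H1D H2D EH]].
suff H2_0 : H2 = set0 by exists H1; rewrite // EH H2_0 setU0 in eqH.
apply/setP => x; rewrite in_set0; apply/negbTE/negP => xH2.
have xH : x \in H by rewrite EH inE xH2 orbT.
have /subS/imageP[y yV1 fxy] : f x \in S by rewrite -eqH; apply/labelsP; exists x.
have xJ : x \in vertices (join D1 D2) by apply/bigcupP; exists H.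
have exy : x = y by apply: inj; rewrite // (subsetP vertices_join_left).
move: dis; rewrite disjoint_subset => /subsetP/(_ y yV1); rewrite inE -exy.
by rewrite (subsetP (face_vert H2D)).
Qed.

Lemma sortable_join_left : sortable (join D1 D2) -> sortable D1.
Proof.
move=> [f [inj pos srt]]; exists f; split.
- by move=> x y xV yV; apply: inj; apply: (subsetP vertices_join_left).
- by move=> x xV; apply: pos; apply: (subsetP vertices_join_left).
move=> F G HF HG.
have [sF sG] := srt F G (join_face_left HF) (join_face_left HG).
have merged_V1 : {subset merged f F G <= [seq f x | x in vertices D1]}.
  move=> y; rewrite mem_sort mem_cat => /orP[] /labelsP[x xH ->]; apply: image_f.
    exact: (subsetP (face_vert HF)).
  exact: (subsetP (face_vert HG)).
split; apply: labeled_face_restrict => // y Hy; apply: merged_V1.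
  by move: Hy; rewrite sortF_sel => /sel_sub.
by move: Hy; rewrite sortG_sel => /sel_sub.
Qed.
End Restriction.

Section Gluing.
Variable T : finType.
Variables D1 D2 : {set {set T}}.
Hypothesis dis : [disjoint vertices D1 & vertices D2].
Variables f1 f2 : T -> nat.

Definition shift : nat := \max_(x in vertices D1) f1 x.

Definition glued (x : T) : nat :=
  if x \in vertices D1 then f1 x else shift + f2 x.

Lemma below_shift x : x \in vertices D1 -> f1 x <= shift.
Proof. by move=> xV; apply: leq_bigmax_cond. Qed.

Lemma notin_vertices_left x : x \in vertices D2 -> x \notin vertices D1.
Proof.
move=> xV2; apply/negP => xV1.
by move: dis; rewrite disjoint_subset => /subsetP/(_ x xV1); rewrite inE xV2.
Qed.

Lemma labels_glued_left H : H \in D1 -> labels glued H = labels f1 H.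
Proof. by move=> HD; apply: labels_eq_in => x xH; rewrite /glued (subsetP (face_vert HD)). Qed.

Lemma labels_glued_right H : H \in D2 -> labels glued H = map (addn shift) (labels f2 H).
Proof.
move=> HD; rewrite -map_comp; apply: labels_eq_in => x xH.
by rewrite /glued (negbTE (notin_vertices_left (subsetP (face_vert HD) x xH))).
Qed.

Lemma glued_injective :
  {in vertices D1 &, injective f1} -> {in vertices D2 &, injective f2} ->
  (forall x, x \in vertices D2 -> 0 < f2 x) ->
  {in vertices (join D1 D2) &, injective glued}.
Proof.
move=> inj1 inj2 pos2 x y /(subsetP (vertices_join _ _)) xV /(subsetP (vertices_join _ _)) yV.
rewrite /glued; move: xV yV; rewrite !inE.
case xV1: (x \in vertices D1); case yV1: (y \in vertices D1) => /= xV yV.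
- exact: inj1.
- by have := below_shift xV1; have := pos2 y yV; lia.
- by have := below_shift yV1; have := pos2 x xV; lia.
- by move/addnI; apply: inj2.
Qed.

Lemma glued_pos :
  (forall x, x \in vertices D1 -> 0 < f1 x) -> (forall x, x \in vertices D2 -> 0 < f2 x) ->
  {in vertices (join D1 D2), forall x, 0 < glued x}.
Proof.
move=> pos1 pos2 x /(subsetP (vertices_join _ _)); rewrite /glued !inE.
by case xV1: (x \in vertices D1) => /= xV; [apply: pos1 | rewrite addn_gt0 pos2 ?orbT].
Qed.

Lemma merged_glued F1 F2 G1 G2 :
  F1 \in D1 -> F2 \in D2 -> G1 \in D1 -> G2 \in D2 ->
  merged glued (F1 :|: F2) (G1 :|: G2) =
  merged f1 F1 G1 ++ map (addn shift) (merged f2 F2 G2).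
Proof.
move=> hF1 hF2 hG1 hG2.
have perm_blocks : perm_eq (labels glued (F1 :|: F2) ++ labels glued (G1 :|: G2))
    ((labels f1 F1 ++ labels f1 G1) ++ map (addn shift) (labels f2 F2 ++ labels f2 G2)).
  apply: perm_trans (perm_cat (labels_setU _ (disjoint_faces dis hF1 hF2))
                               (labels_setU _ (disjoint_faces dis hG1 hG2))) _.
  rewrite perm_catACA map_cat (labels_glued_left hF1) (labels_glued_left hG1).
  by rewrite (labels_glued_right hF2) (labels_glued_right hG2).
rewrite /merged (perm_sortP leq_total leq_trans anti_leq _ _ perm_blocks).
rewrite [LHS]sort_cat_separated ?sort_shift // => x _ + /mapP[y _ ->].
rewrite mem_cat => /orP[] /labelsP[z zH ->]; apply: leq_trans (leq_addr _ _).
  by apply/below_shift/(subsetP (face_vert hF1)).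
by apply/below_shift/(subsetP (face_vert hG1)).
Qed.

Lemma labeled_face_glued S S1 S2 :
  labeled_face f1 D1 S1 -> labeled_face f2 D2 S2 ->
  S =i S1 ++ map (addn shift) S2 -> labeled_face glued (join D1 D2) S.
Proof.
move=> [H1 h1 e1] [H2 h2 e2] eS; exists (H1 :|: H2); first by apply/joinP; exists H1, H2.
move=> x; rewrite eS (perm_mem (labels_setU _ (disjoint_faces dis h1 h2))) !mem_cat.
by rewrite labels_glued_left // labels_glued_right // e1 (eq_mem_map _ e2).
Qed.

Lemma sortable_glued :
  sortable_wrt f1 D1 -> sortable_wrt f2 D2 -> sortable_wrt glued (join D1 D2).
Proof.
move=> s1 s2 F G /joinP[F1 [F2 [hF1 hF2 ->]]] /joinP[G1 [G2 [hG1 hG2 ->]]].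
have [sF1 sG1] := s1 F1 G1 hF1 hG1; have [sF2 sG2] := s2 F2 G2 hF2 hG2.
have sel_split b : sel (fun k => odd k == b) (merged glued (F1 :|: F2) (G1 :|: G2)) =i
    sel (fun k => odd k == b) (merged f1 F1 G1) ++ map (addn shift)
      (sel (fun k => odd k == b (+) odd (size (merged f1 F1 G1))) (merged f2 F2 G2)).
  by move=> x; rewrite merged_glued // sel_parity_cat !mem_cat sel_map.
rewrite sortF_sel sortG_sel; split.
  apply: labeled_face_glued (sel_split false); first by rewrite -sortF_sel.
  by case: (odd _) => /=; [rewrite -sortG_sel | rewrite -sortF_sel].
apply: labeled_face_glued (sel_split true); first by rewrite -sortG_sel.
by case: (odd _) => /=; [rewrite -sortF_sel | rewrite -sortG_sel].
Qed.
End Gluing.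

Theorem proposition1p4 (T : finType) (D1 D2 : {set {set T}}) :
  simplicial_complex D1 -> simplicial_complex D2 ->
  [disjoint vertices D1 & vertices D2] ->
  (sortable (join D1 D2) <-> sortable D1 /\ sortable D2).
Proof.
move=> /andP[e1 _] /andP[e2 _] dis; split.
  move=> sJ; split; first exact: sortable_join_left e2 dis sJ.
  by apply: (sortable_join_left e1); [rewrite disjoint_sym | rewrite join_sym].
move=> [[f1 [inj1 pos1 s1]] [f2 [inj2 pos2 s2]]].
exists (glued D1 f1 f2); split.
- exact: glued_injective.
- exact: glued_pos.
- exact: sortable_glued.
Qed.
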